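(* Fix $\delta>0$ and an integer $J\ge1$. For each group $g$ let $\mathcal K_{g,\mathrm{fb}}\subseteq\mathcal K_g$ (feedback users) and $\mathcal K_{g,\mathrm{vir}}=(\mathcal K_g\setminus\mathcal K_{g,\mathrm{fb}})\times\{1,\dots,J\}$ (virtual users), with given vectors $\mathbf h_k^{(j)}\in\mathbb C^{MB}$ for $(k,j)\in\mathcal K_{g,\mathrm{vir}}$. Let (R-PF) be the problem: maximize $\alpha$ over $\{\mathbf Q_g\}\in\mathcal Q$, $\{R_g\}$, $\{s_k\}_{k\in\mathcal K_{g,\mathrm{fb}}}$, $\{t_{k,j}\}_{(k,j)\in\mathcal K_{g,\mathrm{vir}}}$, $\alpha$, subject to, for all $g$: $\begin{pmatrix}R_g&\alpha\sqrt{\tau_g|\mathcal K_g|}\\ \alpha\sqrt{\tau_g|\mathcal K_g|}&\sum_{k\in\mathcal K_{g,\mathrm{fb}}}s_k+\frac1J\sum_{(k,j)\in\mathcal K_{g,\mathrm{vir}}}t_{k,j}\end{pmatrix}\succeq\mathbf 0$; $r_k(\{\mathbf Q_\ell\})+\delta^{-1}(1-s_k)\ge R_g$ for $k\in\mathcal K_{g,\mathrm{fb}}$; $r_{k,j}(\{\mathbf Q_\ell\})+\delta^{-1}(1-t_{k,j})\ge R_g$ for $(k,j)\in\mathcal K_{g,\mathrm{vir}}$; $0\le s_k\le1$, $0\le t_{k,j}\le1$. Consider the algorithm that starts from any $\{\tilde{\mathbf Q}_\ell\}\in\mathcal Q$ and at each iteration solves the convex problem obtained from (R-PF) by replacing $r_k$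 with $\bar r_k(\cdot\mid\{\tilde{\mathbf Q}_\ell\})$ and $r_{k,j}$ with $\bar r_{k,j}(\cdot\mid\{\tilde{\mathbf Q}_\ell\})$, then sets $\tilde{\mathbf Q}_\ell$ equal to the obtained $\mathbf Q_\ell$ and repeats. Then every limit point of the iterates $(\{\mathbf Q_g\},\{R_g\},\alpha,\{s_k\},\{t_{k,j}\})$ generated by this algorithm is a stationary point of (R-PF).
   Context: Setting: $B$ BSs with $M$ antennas, powers $P_b\ge0$; users partitioned into groups $\mathcal K_1,\dots,\mathcal K_G$; $\mathcal B_g$ the BSs serving group $g$; weights $\tau_g>0$; $\mathbf h_k\in\mathbb C^{MB}$ the stacked channel of user $k$. $\mathcal Q$: tuples of Hermitian PSD $MB\times MB$ matrices $(\mathbf Q_1,\dots,\mathbf Q_G)$ with $\sum_g\mathrm{tr}(\{\mathbf Q_g\}_{b,b})\le P_b$ for all $b$ ($\{\cdot\}_{b,b'}$ the $(b,b')$-th $M\times M$ block) and $\{\mathbf Q_g\}_{b,b'}=\mathbf 0$ if $b\notin\mathcal B_g$ or $b'\notin\mathcal B_g$. For a vector $\mathbf h$ and user of group $g$ define $\rho_g(\mathbf h;\{\mathbf Q_\ell\})=\log_2\big(1+\frac{\mathrm{tr}(\mathbf Q_g\mathbf h\mathbf h^H)}{\sum_{\ell\ne g}\mathrm{tr}(\mathbf Q_\ell\mathbf h\mathbf h^H)+1}\big)$ and $\bar\rho_g(\mathbf h;\{\mathbf Q_\ell\}\mid\{\tilde{\mathbf Q}_\ell\})=\log_2(1+\sum_{\ell=1}^G\mathrm{tr}(\mathbf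 Q_\ell\mathbf h\mathbf h^H))-\log_2(1+\sum_{\ell\ne g}\mathrm{tr}(\tilde{\mathbf Q}_\ell\mathbf h\mathbf h^H))-\frac{\sum_{\ell\ne g}\mathrm{tr}((\mathbf Q_\ell-\tilde{\mathbf Q}_\ell)\mathbf h\mathbf h^H)}{[1+\sum_{\ell\ne g}\mathrm{tr}(\tilde{\mathbf Q}_\ell\mathbf h\mathbf h^H)]\ln2}$. Then $r_k=\rho_g(\mathbf h_k;\cdot)$, $\bar r_k=\bar\rho_g(\mathbf h_k;\cdot\mid\cdot)$, $r_{k,j}=\rho_g(\mathbf h_k^{(j)};\cdot)$, $\bar r_{k,j}=\bar\rho_g(\mathbf h_k^{(j)};\cdot\mid\cdot)$ for $k\in\mathcal K_g$. A stationary point is a feasible point at which no feasible direction has positive directional derivative of the (max-min reformulated) objective. *)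

From Stdlib Require Import Reals Lra Arith Bool.
Open Scope R_scope.

Record C := mkC { Cre : R ; Cim : R }.
Definition C0 : C := mkC 0 0.
Definition Cadd (x y : C) : C := mkC (Cre x + Cre y) (Cim x + Cim y).
Definition Csub (x y : C) : C := mkC (Cre x - Cre y) (Cim x - Cim y).
Definition Cmul (x y : C) : C :=
  mkC (Cre x * Cre y - Cim x * Cim y) (Cre x * Cim y + Cim x * Cre y).
Definition Cconj (x : C) : C := mkC (Cre x) (- Cim x).
Definition Cscale (t : R) (x : C) : C := mkC (t * Cre x) (t * Cim x).

Fixpoint sumR (n : nat) (f : nat -> R) : R :=
  match n with O => 0 | S n' => sumR n' f + f n' end.
Fixpoint sumC (n : nat) (f : nat -> C) : C :=
  match n with O => C0 | S n' => Cadd (sumC n' f) (f n') end.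
Fixpoint countn (n : nat) (p : nat -> bool) : nat :=
  match n with O => O | S n' => (countn n' p + (if p n' then 1 else 0))%nat end.

(** Vectors in C^N and N x N matrices, indexed by nat (only indices < N matter). *)
Definition Vec := nat -> C.
Definition Mat := nat -> nat -> C.

(** tr(Q h h^H) = sum_{i,j} Q_{ij} h_j conj(h_i) *)
Definition trQhhC (N : nat) (Q : Mat) (h : Vec) : C :=
  sumC N (fun i => sumC N (fun j => Cmul (Cmul (Q i j) (h j)) (Cconj (h i)))).
(** its real part (it is real for Hermitian Q) *)
Definition trQhh (N : nat) (Q : Mat) (h : Vec) : R := Cre (trQhhC N Q h).

Definition Hermitian (N : nat) (Q : Mat) : Prop :=
  forall i j, (i < N)%nat -> (j < N)%nat -> Q j i = Cconj (Q i j).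

Definition quadform (N : nat) (Q : Mat) (x : Vec) : C :=
  sumC N (fun i => sumC N (fun j => Cmul (Cmul (Cconj (x i)) (Q i j)) (x j))).

Definition HermPSD (N : nat) (Q : Mat) : Prop :=
  Hermitian N Q /\ forall x : Vec, 0 <= Cre (quadform N Q x).

(** 2x2 real symmetric matrix [[a, b],[b, c]] is PSD *)
Definition PSD2 (a b c : R) : Prop :=
  forall x y : R, 0 <= x * x * a + 2 * x * y * b + y * y * c.

Definition log2 (x : R) : R := ln x / ln 2.

Record Sys := mkSys {
  nB : nat ;                    (* number of BSs *)
  nM : nat ;                    (* antennas per BS *)
  nG : nat ;                    (* number of groups *)
  nK : nat ;                    (* number of users, indexed 0..nK-1 *)
  nJ : nat ;                    (* number of virtual samples J *)
  Pw : nat -> R ;               (* power budget P_b *)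
  grp : nat -> nat ;            (* group of user k: k \in K_{grp k} *)
  serv : nat -> nat -> bool ;   (* serv g b = true iff b \in B_g *)
  tau : nat -> R ;
  fb : nat -> bool ;
  hch : nat -> Vec ;            (* h_k for feedback users *)
  hvir : nat -> nat -> Vec ;    (* h_k^(j), j = 1..J, for non-feedback users *)
  delta : R
}.

Section Defs.
Variable sy : Sys.

(** stacked dimension MB; entry (b, m) of a stacked vector has index b*M+m *)
Definition nN : nat := (nM sy * nB sy)%nat.

Definition blk_tr (Q : Mat) (b : nat) : R :=
  sumR (nM sy) (fun m => Cre (Q (b * nM sy + m)%nat (b * nM sy + m)%nat)).

Definition InQset (Q : nat -> Mat) : Prop :=
  (forall g, (g < nG sy)%nat -> HermPSD nN (Q g)) /\
  (forall b, (b < nB sy)%nat -> sumR (nG sy) (fun g => blk_tr (Q g) b) <= Pw sy b) /\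
  (forall g b b', (g < nG sy)%nat -> (b < nB sy)%nat -> (b' < nB sy)%nat ->
     (serv sy g b = false \/ serv sy g b' = false) ->
     forall m m', (m < nM sy)%nat -> (m' < nM sy)%nat ->
       Q g (b * nM sy + m)%nat (b' * nM sy + m')%nat = C0).

Definition interf (Q : nat -> Mat) (g : nat) (h : Vec) : R :=
  sumR (nG sy) (fun l => if Nat.eqb l g then 0 else trQhh nN (Q l) h).
Definition total (Q : nat -> Mat) (h : Vec) : R :=
  sumR (nG sy) (fun l => trQhh nN (Q l) h).

Definition rho (g : nat) (h : Vec) (Q : nat -> Mat) : R :=
  log2 (1 + trQhh nN (Q g) h / (interf Q g h + 1)).

Definition rhobar (g : nat) (h : Vec) (Q Qt : nat -> Mat) : R :=
  log2 (1 + total Q h) - log2 (1 + interf Qt g h)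
  - sumR (nG sy) (fun l => if Nat.eqb l g then 0
                          else trQhh nN (Q l) h - trQhh nN (Qt l) h)
    / ((1 + interf Qt g h) * ln 2).

Definition card_grp (g : nat) : nat := countn (nK sy) (fun k => Nat.eqb (grp sy k) g).

Record Pt := mkPt {
  pQ : nat -> Mat ;
  pR : nat -> R ;
  pS : nat -> R ;
  pT : nat -> nat -> R ;     (* t_{k,j}, k non-feedback, j = 1..J *)
  pA : R
}.

Definition padd (x y : Pt) : Pt :=
  mkPt (fun g i j => Cadd (pQ x g i j) (pQ y g i j))
       (fun g => pR x g + pR y g) (fun k => pS x k + pS y k)
       (fun k j => pT x k j + pT y k j) (pA x + pA y).
Definition pscale (t : R) (x : Pt) : Pt :=
  mkPt (fun g i j => Cscale t (pQ x g i j)) (fun g => t * pR x g)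
       (fun k => t * pS x k) (fun k j => t * pT x k j) (t * pA x).

Definition sum_fb (x : Pt) (g : nat) : R :=
  sumR (nK sy) (fun k => if fb sy k && Nat.eqb (grp sy k) g then pS x k else 0).
Definition sum_vir (x : Pt) (g : nat) : R :=
  sumR (nK sy) (fun k => if negb (fb sy k) && Nat.eqb (grp sy k) g
                        then sumR (nJ sy) (fun j => pT x k (Datatypes.S j)) else 0).

(** Feasible set of (R-PF) with the rate function [rate g h Q] plugged in *)
Definition feas_gen (rate : nat -> Vec -> (nat -> Mat) -> R) (x : Pt) : Prop :=
  InQset (pQ x) /\
  (forall g, (g < nG sy)%nat ->
     PSD2 (pR x g) (pA x * sqrt (tau sy g * INR (card_grp g)))
          (sum_fb x g + / INR (nJ sy) * sum_vir x g)) /\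
  (forall k, (k < nK sy)%nat -> fb sy k = true ->
     rate (grp sy k) (hch sy k) (pQ x) + / delta sy * (1 - pS x k) >= pR x (grp sy k)) /\
  (forall k j, (k < nK sy)%nat -> fb sy k = false -> (1 <= j <= nJ sy)%nat ->
     rate (grp sy k) (hvir sy k j) (pQ x) + / delta sy * (1 - pT x k j) >= pR x (grp sy k)) /\
  (forall k, (k < nK sy)%nat -> fb sy k = true -> 0 <= pS x k <= 1) /\
  (forall k j, (k < nK sy)%nat -> fb sy k = false -> (1 <= j <= nJ sy)%nat ->
     0 <= pT x k j <= 1).

Definition RPF_feas (x : Pt) : Prop := feas_gen rho x.
Definition CVX_feas (Qt : nat -> Mat) (x : Pt) : Prop :=
  feas_gen (fun g h Q => rhobar g h Q Qt) x.
Definition CVX_opt (Qt : nat -> Mat) (x : Pt) : Prop :=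
  CVX_feas Qt x /\ forall y, CVX_feas Qt y -> pA y <= pA x.

Definition objective (x : Pt) : R := pA x.

Definition feasible_dir (x d : Pt) : Prop :=
  exists eps, 0 < eps /\ forall t, 0 < t <= eps -> RPF_feas (padd x (pscale t d)).

Definition is_dirderiv (f : Pt -> R) (x d : Pt) (l : R) : Prop :=
  forall eps, 0 < eps -> exists eta, 0 < eta /\
    forall t, 0 < t < eta -> Rabs ((f (padd x (pscale t d)) - f x) / t - l) < eps.

Definition stationary (x : Pt) : Prop :=
  RPF_feas x /\
  forall d, feasible_dir x d -> forall l, is_dirderiv objective x d l -> l <= 0.

Definition pt_close (x y : Pt) (eps : R) : Prop :=
  (forall g i j, (g < nG sy)%nat -> (i < nN)%nat -> (j < nN)%nat ->
     Rabs (Cre (pQ x g i j) - Cre (pQ y g i j)) < eps /\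
     Rabs (Cim (pQ x g i j) - Cim (pQ y g i j)) < eps) /\
  (forall g, (g < nG sy)%nat -> Rabs (pR x g - pR y g) < eps) /\
  (forall k, (k < nK sy)%nat -> fb sy k = true -> Rabs (pS x k - pS y k) < eps) /\
  (forall k j, (k < nK sy)%nat -> fb sy k = false -> (1 <= j <= nJ sy)%nat ->
     Rabs (pT x k j - pT y k j) < eps) /\
  Rabs (pA x - pA y) < eps.

Definition limit_point (x : nat -> Pt) (xs : Pt) : Prop :=
  forall eps, 0 < eps -> forall n0, exists n, (n0 <= n)%nat /\ pt_close (x n) xs eps.

Definition sys_ok : Prop :=
  0 < delta sy /\ (1 <= nJ sy)%nat /\
  (forall b, (b < nB sy)%nat -> 0 <= Pw sy b) /\
  (forall g, (g < nG sy)%nat -> 0 < tau sy g) /\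
  (forall k, (k < nK sy)%nat -> (grp sy k < nG sy)%nat) /\
  (forall g, (g < nG sy)%nat -> exists k, (k < nK sy)%nat /\ grp sy k = g).

End Defs.

(* Since [rhobar] lies below [rho] and agrees with it at the linearization
   point, every iterate is feasible for (R-PF) and for the next convex problem,
   so [alpha] increases along the iterates and is bounded by its value at any
   limit point [xs]; the feasible set is closed, so [xs] is feasible.  If a
   feasible direction [d] at [xs] increased [alpha], consider [xs + t d] with
   [R], [s], [t] and [alpha] shrunk by a factor [1 - lam].  The gap
   [rho - rhobar] is at most the squared change of interference, so
   [lam = O(t^2 + e^2)] makes this point feasible for the convex problem
   linearized at an iterate [e]-close to [xs]; its objective
   [(1 - lam) (alpha(xs) + t alpha(d))] then exceeds [alpha(xs)] for small
   [t] and [e], contradicting the bound. *)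

From Pilot Require Import Defs.
From Stdlib Require Import Reals Lra Lia Psatz.
Open Scope R_scope.

Lemma sumR_ext n f g : (forall i, (i < n)%nat -> f i = g i) -> sumR n f = sumR n g.
Proof. induction n as [|n IH]; intros Hfg; simpl; [reflexivity|]. rewrite IH, Hfg; auto. Qed.

Lemma sumR_le n f g : (forall i, (i < n)%nat -> f i <= g i) -> sumR n f <= sumR n g.
Proof.
  induction n as [|n IH]; intros Hfg; simpl; [lra|].
  apply Rplus_le_compat; auto.
Qed.

Lemma sumR_const0 n : sumR n (fun _ => 0) = 0.
Proof. induction n; simpl; lra. Qed.

Lemma sumR_ge0 n f : (forall i, (i < n)%nat -> 0 <= f i) -> 0 <= sumR n f.
Proof. intros Hf. rewrite <- (sumR_const0 n). apply sumR_le; auto. Qed.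

Lemma sumR_plus n f g : sumR n (fun i => f i + g i) = sumR n f + sumR n g.
Proof. induction n; simpl; lra. Qed.

Lemma sumR_minus n f g : sumR n (fun i => f i - g i) = sumR n f - sumR n g.
Proof. induction n; simpl; lra. Qed.

Lemma sumR_scal n c f : sumR n (fun i => c * f i) = c * sumR n f.
Proof. induction n as [|n IH]; simpl; [lra|]. rewrite IH; lra. Qed.

Lemma sumR_term_le n f i :
  (forall k, (k < n)%nat -> 0 <= f k) -> (i < n)%nat -> f i <= sumR n f.
Proof.
  induction n as [|n IH]; intros Hf Hi; [lia|]. simpl.
  assert (0 <= sumR n f) by (apply sumR_ge0; auto).
  destruct (Nat.eq_dec i n) as [->|Hin]; [lra|].
  assert (f i <= sumR n f) by (apply IH; auto; lia).
  assert (0 <= f n) by auto. lra.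
Qed.

Lemma Rabs_sumR_sub_le n f g c :
  (forall i, (i < n)%nat -> Rabs (f i - g i) <= c) -> Rabs (sumR n f - sumR n g) <= INR n * c.
Proof.
  induction n as [|n IH]; intros Hfg; simpl sumR.
  - rewrite Rminus_0_r, Rabs_R0; simpl; lra.
  - rewrite S_INR.
    replace (sumR n f + f n - (sumR n g + g n)) with ((sumR n f - sumR n g) + (f n - g n)) by ring.
    eapply Rle_trans; [apply Rabs_triang|].
    assert (Rabs (sumR n f - sumR n g) <= INR n * c) by auto.
    assert (Rabs (f n - g n) <= c) by auto. lra.
Qed.

Lemma sumR_skip n f g : (g < n)%nat ->
  sumR n (fun l => if Nat.eqb l g then 0 else f l) + f g = sumR n f.
Proof.
  induction n as [|n IH]; intros Hg; [lia|]. simpl.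
  destruct (Nat.eqb_spec n g) as [Hng|Hng].
  - subst g. rewrite (sumR_ext n _ f); [lra|].
    intros i Hi. destruct (Nat.eqb_spec i n); [lia|auto].
  - rewrite <- (IH ltac:(lia)). lra.
Qed.

Lemma Cre_sumC n f : Cre (sumC n f) = sumR n (fun i => Cre (f i)).
Proof. induction n as [|n IH]; simpl; [reflexivity|]. rewrite IH; reflexivity. Qed.

Lemma C_eq (a b : Defs.C) : Cre a = Cre b -> Cim a = Cim b -> a = b.
Proof. destruct a, b; simpl; intros -> ->; reflexivity. Qed.

Lemma Rabs_le_inv a b : Rabs a <= b -> - b <= a <= b.
Proof. unfold Rabs; destruct Rcase_abs; lra. Qed.

Lemma ln_sub_le a b : 0 < a -> 0 < b -> ln a - ln b <= (a - b) / b.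
Proof.
  intros Ha Hb.
  assert (Hb' : 0 < / b) by (apply Rinv_0_lt_compat; auto).
  replace (ln a - ln b) with (ln (a * / b)) by (rewrite ln_mult, ln_Rinv; auto; ring).
  pose proof (exp_ineq1_le (ln (a * / b))) as Hexp.
  rewrite exp_ln in Hexp by (apply Rmult_lt_0_compat; auto).
  replace ((a - b) / b) with (a * / b - 1) by (field; lra). lra.
Qed.

Lemma ln2_pos : 0 < ln 2.
Proof. pose proof ln_lt_2. lra. Qed.

Lemma ln_linearization_gap u v : 0 <= u -> 0 <= v ->
  0 <= ln (1 + v) - ln (1 + u) + (u - v) / (1 + v) <= (u - v) ^ 2.
Proof.
  intros Hu Hv.
  pose proof (ln_sub_le (1 + u) (1 + v) ltac:(lra) ltac:(lra)) as Huv.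
  pose proof (ln_sub_le (1 + v) (1 + u) ltac:(lra) ltac:(lra)) as Hvu.
  replace (1 + u - (1 + v)) with (u - v) in Huv by ring.
  split; [lra|].
  enough ((1 + v - (1 + u)) / (1 + u) + (u - v) / (1 + v) <= (u - v) ^ 2) by lra.
  replace ((1 + v - (1 + u)) / (1 + u) + (u - v) / (1 + v))
    with ((u - v) ^ 2 * / ((1 + u) * (1 + v))) by (field; lra).
  assert (Hinv : 0 < / ((1 + u) * (1 + v)) <= 1).
  { split; [apply Rinv_0_lt_compat; nra|].
    rewrite <- Rinv_1. apply Rinv_le_contravar; nra. }
  pose proof (pow2_ge_0 (u - v)). nra.
Qed.

Lemma Rabs_ln1p_sub_le a b : 0 <= a -> 0 <= b ->
  Rabs (ln (1 + a) - ln (1 + b)) <= Rabs (a - b).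
Proof.
  intros Ha Hb.
  pose proof (ln_sub_le (1 + a) (1 + b) ltac:(lra) ltac:(lra)) as Hab.
  pose proof (ln_sub_le (1 + b) (1 + a) ltac:(lra) ltac:(lra)) as Hba.
  assert (Hdiv : forall x y, 0 <= y -> x / (1 + y) <= Rabs x).
  { intros x y Hy.
    assert (Hinv : 0 < / (1 + y) <= 1).
    { split; [apply Rinv_0_lt_compat; lra|].
      rewrite <- Rinv_1. apply Rinv_le_contravar; lra. }
    pose proof (Rle_abs x). pose proof (Rabs_pos x). unfold Rdiv. nra. }
  replace (1 + a - (1 + b)) with (a - b) in Hab by ring.
  replace (1 + b - (1 + a)) with (- (a - b)) in Hba by ring.
  pose proof (Hdiv (a - b) b Hb). pose proof (Hdiv (- (a - b)) a Ha).
  rewrite Rabs_Ropp in *. apply Rabs_le. lra.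
Qed.

Lemma nonneg_of_approx a K : 0 <= K ->
  (forall e, 0 < e -> exists v, 0 <= v /\ Rabs (v - a) <= K * e) -> 0 <= a.
Proof.
  intros HK Happrox. destruct (Rle_or_lt 0 a) as [|Ha]; auto.
  set (e := - a / (2 * (K + 1))).
  assert (He : 0 < e) by (apply Rdiv_lt_0_compat; lra).
  assert (HKe : K * e <= - a / 2).
  { replace (- a / 2) with ((K + 1) * e) by (unfold e; field; lra). nra. }
  destruct (Happrox e He) as [v [Hv Hva]].
  apply Rabs_le_inv in Hva. lra.
Qed.

(* [mat_pair N Q w] is the real part of the Frobenius pairing
   [sum_{i,j} Q_ij w_ij]; both [tr(Q h h^H)] and [x^H Q x] are of this form. *)
Definition mat_pair (N : nat) (Q w : Mat) : R :=
  sumR N (fun i => sumR N (fun j => Cre (Q i j) * Cre (w i j) - Cim (Q i j) * Cim (w i j))).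

Definition mat_l1 (N : nat) (w : Mat) : R :=
  sumR N (fun i => sumR N (fun j => Rabs (Cre (w i j)) + Rabs (Cim (w i j)))).

Definition outer (h : Vec) : Mat := fun i j => Cmul (h j) (Cconj (h i)).

Lemma trQhh_pair N Q h : trQhh N Q h = mat_pair N Q (outer h).
Proof.
  unfold trQhh, trQhhC, mat_pair, outer. rewrite Cre_sumC. apply sumR_ext; intros i _.
  rewrite Cre_sumC. apply sumR_ext; intros j _. destruct (Q i j), (h j), (h i); simpl. ring.
Qed.

Lemma quadform_pair N Q x :
  Cre (quadform N Q x) = mat_pair N Q (fun i j => Cmul (Cconj (x i)) (x j)).
Proof.
  unfold quadform, mat_pair. rewrite Cre_sumC. apply sumR_ext; intros i _.
  rewrite Cre_sumC. apply sumR_ext; intros j _. destruct (Q i j), (x j), (x i); simpl. ring.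
Qed.

Lemma trQhh_quadform N Q h : trQhh N Q h = Cre (quadform N Q h).
Proof.
  rewrite trQhh_pair, quadform_pair. unfold mat_pair, outer.
  apply sumR_ext; intros i _. apply sumR_ext; intros j _. destruct (h j), (h i); simpl. ring.
Qed.

Lemma mat_pair_add_scale N Q D t w :
  mat_pair N (fun i j => Cadd (Q i j) (Cscale t (D i j))) w = mat_pair N Q w + t * mat_pair N D w.
Proof.
  unfold mat_pair. rewrite <- sumR_scal, <- sumR_plus. apply sumR_ext; intros i _.
  rewrite <- sumR_scal, <- sumR_plus. apply sumR_ext; intros j _. simpl. ring.
Qed.

Lemma mat_l1_ge0 N w : 0 <= mat_l1 N w.
Proof.
  apply sumR_ge0; intros i _; apply sumR_ge0; intros j _.
  pose proof (Rabs_pos (Cre (w i j))). pose proof (Rabs_pos (Cim (w i j))). lra.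
Qed.

Lemma mat_l1_entry_le N w i j : (i < N)%nat -> (j < N)%nat ->
  Rabs (Cre (w i j)) + Rabs (Cim (w i j)) <= mat_l1 N w.
Proof.
  intros Hi Hj.
  assert (Hpos : forall i j, 0 <= Rabs (Cre (w i j)) + Rabs (Cim (w i j))).
  { intros i' j'. pose proof (Rabs_pos (Cre (w i' j'))). pose proof (Rabs_pos (Cim (w i' j'))). lra. }
  eapply Rle_trans; [|apply (sumR_term_le N _ i); auto; intros; apply sumR_ge0; auto].
  apply (sumR_term_le N (fun j => Rabs (Cre (w i j)) + Rabs (Cim (w i j)))); auto.
Qed.

Lemma Rabs_mat_pair_sub_le N Q Q' w e :
  (forall i j, (i < N)%nat -> (j < N)%nat ->
    Rabs (Cre (Q i j) - Cre (Q' i j)) <= e /\ Rabs (Cim (Q i j) - Cim (Q' i j)) <= e) ->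
  Rabs (mat_pair N Q w - mat_pair N Q' w) <= INR N * (INR N * (e * mat_l1 N w)).
Proof.
  intros HQ. unfold mat_pair. apply Rabs_sumR_sub_le; intros i Hi.
  apply Rabs_sumR_sub_le; intros j Hj. destruct (HQ i j Hi Hj) as [Hre Him].
  pose proof (mat_l1_entry_le N w i j Hi Hj) as Hw.
  replace (Cre (Q i j) * Cre (w i j) - Cim (Q i j) * Cim (w i j) -
     (Cre (Q' i j) * Cre (w i j) - Cim (Q' i j) * Cim (w i j)))
    with ((Cre (Q i j) - Cre (Q' i j)) * Cre (w i j)
          - (Cim (Q i j) - Cim (Q' i j)) * Cim (w i j)) by ring.
  eapply Rle_trans; [apply Rabs_triang|]. rewrite Rabs_Ropp, !Rabs_mult.
  pose proof (Rabs_pos (Cre (w i j))). pose proof (Rabs_pos (Cim (w i j))).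
  pose proof (Rabs_pos (Cre (Q i j) - Cre (Q' i j))).
  pose proof (Rabs_pos (Cim (Q i j) - Cim (Q' i j))).
  nra.
Qed.

Section Rates.
Variable sy : Sys.

Definition nonneg_tr (Q : nat -> Mat) (h : Vec) : Prop :=
  forall l, (l < nG sy)%nat -> 0 <= trQhh (nN sy) (Q l) h.

Lemma InQset_nonneg_tr Q h : InQset sy Q -> nonneg_tr Q h.
Proof. intros [HPSD _] l Hl. rewrite trQhh_quadform. apply (proj2 (HPSD l Hl)). Qed.

Lemma interf_ge0 Q g h : nonneg_tr Q h -> 0 <= interf sy Q g h.
Proof. intros HQ. apply sumR_ge0; intros l Hl. destruct Nat.eqb; [lra|auto]. Qed.

Lemma total_ge0 Q h : nonneg_tr Q h -> 0 <= total sy Q h.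
Proof. intros HQ. apply sumR_ge0; auto. Qed.

Lemma total_split Q g h : (g < nG sy)%nat ->
  total sy Q h = interf sy Q g h + trQhh (nN sy) (Q g) h.
Proof. intros Hg. symmetry. apply sumR_skip; auto. Qed.

Lemma rho_split g h Q : (g < nG sy)%nat -> nonneg_tr Q h ->
  rho sy g h Q = log2 (1 + total sy Q h) - log2 (1 + interf sy Q g h).
Proof.
  intros Hg HQ. pose proof (interf_ge0 Q g h HQ). pose proof (HQ g Hg).
  unfold rho, log2. rewrite (total_split Q g h Hg).
  replace (1 + trQhh (nN sy) (Q g) h / (interf sy Q g h + 1)) with
    ((1 + (interf sy Q g h + trQhh (nN sy) (Q g) h)) * / (1 + interf sy Q g h)) by (field; lra).
  rewrite ln_mult, ln_Rinv; try lra. apply Rinv_0_lt_compat; lra.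
Qed.

Lemma rho_ge0 g h Q : (g < nG sy)%nat -> nonneg_tr Q h -> 0 <= rho sy g h Q.
Proof.
  intros Hg HQ. pose proof (interf_ge0 Q g h HQ). pose proof (HQ g Hg). pose proof ln2_pos.
  unfold rho, log2. apply Rmult_le_pos; [|left; apply Rinv_0_lt_compat; lra].
  set (x := 1 + trQhh (nN sy) (Q g) h / (interf sy Q g h + 1)).
  assert (Hx : 1 <= x).
  { assert (0 <= trQhh (nN sy) (Q g) h / (interf sy Q g h + 1)) by (apply Rmult_le_pos; [lra|left; apply Rinv_0_lt_compat; lra]).
    unfold x; lra. }
  pose proof (ln_sub_le 1 x ltac:(lra) ltac:(lra)) as Hln. rewrite ln_1 in Hln.
  assert (0 < / x) by (apply Rinv_0_lt_compat; lra).
  unfold Rdiv in Hln. nra.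
Qed.

(* [rhobar] linearizes the concave term [- log2 (1 + interf)] of [rho] at [Qt]. *)
Lemma rho_sub_rhobar_bounds g h Q Qt : (g < nG sy)%nat -> nonneg_tr Q h -> nonneg_tr Qt h ->
  0 <= rho sy g h Q - rhobar sy g h Q Qt <= (interf sy Q g h - interf sy Qt g h) ^ 2 / ln 2.
Proof.
  intros Hg HQ HQt. rewrite rho_split by auto. unfold rhobar.
  assert (Hdiff : sumR (nG sy) (fun l => if Nat.eqb l g then 0
                    else trQhh (nN sy) (Q l) h - trQhh (nN sy) (Qt l) h) =
                  interf sy Q g h - interf sy Qt g h).
  { unfold interf. rewrite <- sumR_minus. apply sumR_ext; intros l _. destruct Nat.eqb; ring. }
  rewrite Hdiff.
  pose proof (ln_linearization_gap _ _ (interf_ge0 Q g h HQ) (interf_ge0 Qt g h HQt)) as Hgap.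
  pose proof ln2_pos. pose proof (interf_ge0 Qt g h HQt).
  set (u := interf sy Q g h) in *. set (v := interf sy Qt g h) in *.
  replace (log2 (1 + total sy Q h) - log2 (1 + u) -
     (log2 (1 + total sy Q h) - log2 (1 + v) - (u - v) / ((1 + v) * ln 2)))
    with ((ln (1 + v) - ln (1 + u) + (u - v) / (1 + v)) * / ln 2)
    by (unfold log2; field; lra).
  assert (0 < / ln 2) by (apply Rinv_0_lt_compat; lra).
  unfold Rdiv at 2. split; [|apply Rmult_le_compat_r]; nra.
Qed.

Lemma Rabs_interf_sub_le Q Q' g h c :
  (forall l, (l < nG sy)%nat -> Rabs (trQhh (nN sy) (Q l) h - trQhh (nN sy) (Q' l) h) <= c) ->
  0 <= c -> Rabs (interf sy Q g h - interf sy Q' g h) <= INR (nG sy) * c.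
Proof.
  intros Hc Hc0. apply Rabs_sumR_sub_le; intros l Hl.
  destruct Nat.eqb; [rewrite Rminus_0_r, Rabs_R0|]; auto.
Qed.

Lemma Rabs_rho_sub_le g h Q Q' c : (g < nG sy)%nat -> nonneg_tr Q h -> nonneg_tr Q' h ->
  (forall l, (l < nG sy)%nat -> Rabs (trQhh (nN sy) (Q l) h - trQhh (nN sy) (Q' l) h) <= c) ->
  Rabs (rho sy g h Q - rho sy g h Q') <= 2 * (INR (nG sy) * c) / ln 2.
Proof.
  intros Hg HQ HQ' Hc.
  assert (Hc0 : 0 <= c) by (eapply Rle_trans; [apply Rabs_pos|apply (Hc g Hg)]).
  rewrite !rho_split by auto.
  pose proof (Rabs_sumR_sub_le _ _ _ _ Hc) as HT. fold (total sy Q h) (total sy Q' h) in HT.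
  pose proof (Rabs_interf_sub_le Q Q' g h c Hc Hc0) as HI.
  pose proof (Rabs_ln1p_sub_le _ _ (total_ge0 Q h HQ) (total_ge0 Q' h HQ')).
  pose proof (Rabs_ln1p_sub_le _ _ (interf_ge0 Q g h HQ) (interf_ge0 Q' g h HQ')).
  pose proof ln2_pos.
  unfold log2.
  replace (ln (1 + total sy Q h) / ln 2 - ln (1 + interf sy Q g h) / ln 2 -
    (ln (1 + total sy Q' h) / ln 2 - ln (1 + interf sy Q' g h) / ln 2)) with
    (((ln (1 + total sy Q h) - ln (1 + total sy Q' h))
      - (ln (1 + interf sy Q g h) - ln (1 + interf sy Q' g h))) / ln 2)
    by (field; lra).
  unfold Rdiv. rewrite Rabs_mult, (Rabs_right (/ ln 2)) by (left; apply Rinv_0_lt_compat; lra).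
  apply Rmult_le_compat_r; [left; apply Rinv_0_lt_compat; lra|].
  eapply Rle_trans; [apply Rabs_triang|]. rewrite Rabs_Ropp. lra.
Qed.

End Rates.

Section Feasibility.
Variable sy : Sys.

Definition user_chan (g : nat) (h : Vec) : Prop :=
  exists k, (k < nK sy)%nat /\ g = grp sy k /\
    ((fb sy k = true /\ h = hch sy k) \/
     (fb sy k = false /\ exists j, (1 <= j <= nJ sy)%nat /\ h = hvir sy k j)).

Lemma user_chan_fb k : (k < nK sy)%nat -> fb sy k = true -> user_chan (grp sy k) (hch sy k).
Proof. intros Hk Hf. exists k. auto. Qed.

Lemma user_chan_vir k j : (k < nK sy)%nat -> fb sy k = false -> (1 <= j <= nJ sy)%nat ->
  user_chan (grp sy k) (hvir sy k j).
Proof. intros Hk Hf Hj. exists k. split; [|split]; eauto 6. Qed.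

Lemma user_chan_grp g h : sys_ok sy -> user_chan g h -> (g < nG sy)%nat.
Proof.
  intros (_ & _ & _ & _ & Hgrp & _) (k & Hk & -> & _). auto.
Qed.

Lemma user_chan_bounded (phi : nat -> Vec -> R) :
  exists S, 0 <= S /\ forall g h, user_chan g h -> phi g h <= S.
Proof.
  set (term k := if fb sy k then Rabs (phi (grp sy k) (hch sy k))
                 else sumR (nJ sy) (fun j => Rabs (phi (grp sy k) (hvir sy k (S j))))).
  assert (Hterm : forall k, 0 <= term k).
  { intros k. unfold term. destruct (fb sy k); [apply Rabs_pos|].
    apply sumR_ge0; intros; apply Rabs_pos. }
  exists (sumR (nK sy) term). split; [apply sumR_ge0; auto|].
  intros g h (k & Hk & -> & Hh).
  eapply Rle_trans; [|apply (sumR_term_le _ _ k); auto].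
  eapply Rle_trans; [apply Rle_abs|]. unfold term.
  destruct Hh as [[-> ->] | (-> & [|j] & Hj & ->)]; [lra|lia|].
  apply (sumR_term_le _ (fun j => Rabs (phi (grp sy k) (hvir sy k (S j))))); auto.
  intros; apply Rabs_pos. lia.
Qed.

Lemma feas_gen_mono (r1 r2 : nat -> Vec -> (nat -> Mat) -> R) p :
  (forall g h, user_chan g h -> r2 g h (pQ p) <= r1 g h (pQ p)) ->
  feas_gen sy r2 p -> feas_gen sy r1 p.
Proof.
  intros Hr (HQ & HPSD & Hfb & Hvir & Hs & Ht).
  split; [exact HQ|]. split; [exact HPSD|]. split; [|split; [|split; [exact Hs|exact Ht]]].
  - intros k Hk Hf. specialize (Hfb k Hk Hf).
    pose proof (Hr _ _ (user_chan_fb k Hk Hf)). lra.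
  - intros k j Hk Hf Hj. specialize (Hvir k j Hk Hf Hj).
    pose proof (Hr _ _ (user_chan_vir k j Hk Hf Hj)). lra.
Qed.

Lemma cvx_feas_rpf_feas Qt p : sys_ok sy -> InQset sy Qt -> CVX_feas sy Qt p -> RPF_feas sy p.
Proof.
  intros Hs HQt Hp. apply (feas_gen_mono _ (fun g h Q => rhobar sy g h Q Qt) p); auto. intros g h Hgh.
  pose proof (rho_sub_rhobar_bounds sy g h (pQ p) Qt (user_chan_grp g h Hs Hgh)
    (InQset_nonneg_tr sy _ h (proj1 Hp)) (InQset_nonneg_tr sy _ h HQt)). lra.
Qed.

Lemma rpf_feas_cvx_feas p : sys_ok sy -> RPF_feas sy p -> CVX_feas sy (pQ p) p.
Proof.
  intros Hs Hp. apply (feas_gen_mono _ (rho sy) p); auto. intros g h Hgh.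
  pose proof (InQset_nonneg_tr sy _ h (proj1 Hp)) as Hnn.
  pose proof (rho_sub_rhobar_bounds sy g h (pQ p) (pQ p) (user_chan_grp g h Hs Hgh) Hnn Hnn).
  replace ((interf sy (pQ p) g h - interf sy (pQ p) g h) ^ 2 / ln 2) with 0 in * by (unfold Rdiv; ring).
  lra.
Qed.

Definition shrink (c : R) (p : Pt) : Pt :=
  mkPt (pQ p) (fun g => c * pR p g) (fun k => c * pS p k) (fun k j => c * pT p k j) (c * pA p).

Lemma feas_gen_shrink (r1 r2 : nat -> Vec -> (nat -> Mat) -> R) p c :
  feas_gen sy r1 p -> 0 <= c <= 1 ->
  (forall g h, user_chan g h -> 0 <= r1 g h (pQ p)) ->
  (forall g h, user_chan g h -> r1 g h (pQ p) - r2 g h (pQ p) <= (1 - c) * / delta sy) ->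
  feas_gen sy r2 (shrink c p).
Proof.
  intros (HQ & HPSD & Hfb & Hvir & Hs & Ht) Hc Hr1 Hgap.
  assert (Hrate : forall g h s R, user_chan g h ->
            r1 g h (pQ p) + / delta sy * (1 - s) >= R ->
            r2 g h (pQ p) + / delta sy * (1 - c * s) >= c * R).
  { intros g h s R Hgh HR. pose proof (Hr1 g h Hgh). pose proof (Hgap g h Hgh). nra. }
  split; [exact HQ|]. split; [|split; [|split; [|split]]].
  - intros g Hg u v.
    assert (Hfb_sum : sum_fb sy (shrink c p) g = c * sum_fb sy p g).
    { unfold sum_fb. rewrite <- sumR_scal. apply sumR_ext; intros k _.
      simpl. destruct (andb _ _); ring. }
    assert (Hvir_sum : sum_vir sy (shrink c p) g = c * sum_vir sy p g).
    { unfold sum_vir. rewrite <- sumR_scal. apply sumR_ext; intros k _.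
      destruct (andb _ _); [|ring]. rewrite <- sumR_scal. apply sumR_ext; reflexivity. }
    rewrite Hfb_sum, Hvir_sum. simpl. specialize (HPSD g Hg u v). nra.
  - intros k Hk Hf. apply Hrate; auto. apply user_chan_fb; auto.
  - intros k j Hk Hf Hj. apply Hrate; auto. apply user_chan_vir; auto.
  - intros k Hk Hf. simpl. specialize (Hs k Hk Hf). nra.
  - intros k j Hk Hf Hj. simpl. specialize (Ht k j Hk Hf Hj). nra.
Qed.

End Feasibility.

Section Closeness.
Variable sy : Sys.

Lemma pt_close_Q p q e g i j : pt_close sy p q e -> (g < nG sy)%nat ->
  (i < nN sy)%nat -> (j < nN sy)%nat ->
  Rabs (Cre (pQ p g i j) - Cre (pQ q g i j)) <= e /\ Rabs (Cim (pQ p g i j) - Cim (pQ q g i j)) <= e.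
Proof. intros [HQ _] Hg Hi Hj. destruct (HQ g i j Hg Hi Hj). split; lra. Qed.

Lemma pt_close_pos p q e : pt_close sy p q e -> 0 < e.
Proof. intros (_ & _ & _ & _ & HA). pose proof (Rabs_pos (pA p - pA q)). lra. Qed.

Definition tr_const (h : Vec) : R := INR (nN sy) * (INR (nN sy) * mat_l1 (nN sy) (outer h)).

Lemma tr_const_ge0 h : 0 <= tr_const h.
Proof.
  pose proof (pos_INR (nN sy)). pose proof (mat_l1_ge0 (nN sy) (outer h)).
  unfold tr_const. repeat apply Rmult_le_pos; auto.
Qed.

Lemma Rabs_trQhh_close p q e l h : pt_close sy p q e -> (l < nG sy)%nat ->
  Rabs (trQhh (nN sy) (pQ p l) h - trQhh (nN sy) (pQ q l) h) <= tr_const h * e.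
Proof.
  intros Hc Hl. rewrite !trQhh_pair. unfold tr_const.
  replace (INR (nN sy) * (INR (nN sy) * mat_l1 (nN sy) (outer h)) * e)
    with (INR (nN sy) * (INR (nN sy) * (e * mat_l1 (nN sy) (outer h)))) by ring.
  apply Rabs_mat_pair_sub_le. intros i j Hi Hj. apply (pt_close_Q p q e l i j); auto.
Qed.

Lemma Rabs_interf_close p q e g h : pt_close sy p q e ->
  Rabs (interf sy (pQ p) g h - interf sy (pQ q) g h) <= INR (nG sy) * tr_const h * e.
Proof.
  intros Hc. rewrite Rmult_assoc. apply Rabs_interf_sub_le.
  - intros l Hl. apply Rabs_trQhh_close; auto.
  - pose proof (tr_const_ge0 h). pose proof (pt_close_pos p q e Hc). nra.
Qed.

Lemma Rabs_rho_close p q e g h : pt_close sy p q e -> (g < nG sy)%nat ->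
  nonneg_tr sy (pQ p) h -> nonneg_tr sy (pQ q) h ->
  Rabs (rho sy g h (pQ p) - rho sy g h (pQ q)) <= 2 * INR (nG sy) * tr_const h / ln 2 * e.
Proof.
  intros Hc Hg Hp Hq.
  replace (2 * INR (nG sy) * tr_const h / ln 2 * e)
    with (2 * (INR (nG sy) * (tr_const h * e)) / ln 2) by (unfold Rdiv; ring).
  apply Rabs_rho_sub_le; auto. intros l Hl. apply Rabs_trQhh_close; auto.
Qed.

Lemma Rabs_sum_fb_close p q e g : pt_close sy p q e ->
  Rabs (sum_fb sy p g - sum_fb sy q g) <= INR (nK sy) * e.
Proof.
  intros Hc. pose proof (pt_close_pos p q e Hc). destruct Hc as (_ & _ & HS & _).
  apply Rabs_sumR_sub_le. intros k Hk.
  destruct (fb sy k) eqn:Hf; simpl; [destruct Nat.eqb|];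
    try (rewrite Rminus_0_r, Rabs_R0; lra).
  left. auto.
Qed.

Lemma Rabs_sum_vir_close p q e g : pt_close sy p q e ->
  Rabs (sum_vir sy p g - sum_vir sy q g) <= INR (nK sy) * (INR (nJ sy) * e).
Proof.
  intros Hc. pose proof (pt_close_pos p q e Hc). destruct Hc as (_ & _ & _ & HT & _).
  pose proof (pos_INR (nJ sy)).
  apply Rabs_sumR_sub_le. intros k Hk.
  destruct (fb sy k) eqn:Hf; simpl; [|destruct Nat.eqb];
    try (rewrite Rminus_0_r, Rabs_R0; nra).
  apply Rabs_sumR_sub_le. intros j Hj. left. apply HT; auto; lia.
Qed.

End Closeness.

Section ClosedFeasibleSet.
Variables (sy : Sys) (xs : Pt).
Hypothesis Hs : sys_ok sy.
Hypothesis Happrox : forall e, 0 < e -> exists p, RPF_feas sy p /\ pt_close sy p xs e.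

Lemma approx_nonneg (F : Pt -> R) K : 0 <= K ->
  (forall p e, RPF_feas sy p -> pt_close sy p xs e -> 0 <= F p /\ Rabs (F p - F xs) <= K * e) ->
  0 <= F xs.
Proof.
  intros HK HF. apply (nonneg_of_approx _ K HK). intros e He.
  destruct (Happrox e He) as (p & Hp & Hc). exists (F p). auto.
Qed.

Lemma approx_eq0 (F : Pt -> R) K : 0 <= K ->
  (forall p e, RPF_feas sy p -> pt_close sy p xs e -> F p = 0 /\ Rabs (F p - F xs) <= K * e) ->
  F xs = 0.
Proof.
  intros HK HF.
  assert (0 <= F xs).
  { apply (approx_nonneg F K HK). intros p e Hp Hc. destruct (HF p e Hp Hc). lra. }
  assert (0 <= - F xs).
  { apply (approx_nonneg (fun p => - F p) K HK). intros p e Hp Hc.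
    destruct (HF p e Hp Hc) as [HFp Hd]. split; [lra|].
    replace (- F p - - F xs) with (- (F p - F xs)) by ring. rewrite Rabs_Ropp. auto. }
  lra.
Qed.

Lemma approx_Hermitian g : (g < nG sy)%nat -> Hermitian (nN sy) (pQ xs g).
Proof.
  intros Hg i j Hi Hj.
  assert (Hclose : forall p e, pt_close sy p xs e -> RPF_feas sy p ->
            Rabs (Cre (pQ p g i j) - Cre (pQ xs g i j)) <= e /\
            Rabs (Cim (pQ p g i j) - Cim (pQ xs g i j)) <= e /\
            Rabs (Cre (pQ p g j i) - Cre (pQ xs g j i)) <= e /\
            Rabs (Cim (pQ p g j i) - Cim (pQ xs g j i)) <= e /\
            pQ p g j i = Cconj (pQ p g i j)).
  { intros p e Hc Hp.
    destruct (pt_close_Q sy p xs e g i j Hc Hg Hi Hj).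
    destruct (pt_close_Q sy p xs e g j i Hc Hg Hj Hi).
    repeat split; auto. apply (proj1 (proj1 (proj1 Hp) g Hg)); auto. }
  apply C_eq; simpl.
  - apply Rminus_diag_uniq.
    apply (approx_eq0 (fun p => Cre (pQ p g j i) - Cre (pQ p g i j)) 2); [lra|].
    intros p e Hp Hc. destruct (Hclose p e Hc Hp) as (H1 & _ & H2 & _ & Hherm).
    rewrite Hherm in *. simpl in *. split; [ring|].
    apply Rabs_le_inv in H1, H2. apply Rabs_le. lra.
  - apply Rplus_opp_r_uniq.
    apply (approx_eq0 (fun p => Cim (pQ p g i j) + Cim (pQ p g j i)) 2); [lra|].
    intros p e Hp Hc. destruct (Hclose p e Hc Hp) as (_ & H1 & _ & H2 & Hherm).
    rewrite Hherm in *. simpl in *. split; [ring|].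
    apply Rabs_le_inv in H1, H2. apply Rabs_le. lra.
Qed.

Lemma approx_quadform_nonneg g v : (g < nG sy)%nat -> 0 <= Cre (quadform (nN sy) (pQ xs g) v).
Proof.
  intros Hg. rewrite quadform_pair.
  set (w := fun i j => Cmul (Cconj (v i)) (v j)).
  apply (approx_nonneg (fun p => mat_pair (nN sy) (pQ p g) w)
           (INR (nN sy) * (INR (nN sy) * mat_l1 (nN sy) w))).
  { pose proof (pos_INR (nN sy)). pose proof (mat_l1_ge0 (nN sy) w).
    repeat apply Rmult_le_pos; auto. }
  intros p e Hp Hc. split.
  - unfold w. rewrite <- quadform_pair. apply (proj2 (proj1 (proj1 Hp) g Hg)).
  - replace (INR (nN sy) * (INR (nN sy) * mat_l1 (nN sy) w) * e)
      with (INR (nN sy) * (INR (nN sy) * (e * mat_l1 (nN sy) w))) by ring.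
    apply Rabs_mat_pair_sub_le. intros i j Hi Hj. apply (pt_close_Q sy); auto.
Qed.

Lemma approx_power_budget b : (b < nB sy)%nat ->
  sumR (nG sy) (fun g => blk_tr sy (pQ xs g) b) <= Pw sy b.
Proof.
  intros Hb. apply Rge_le, Rminus_ge, Rle_ge.
  apply (approx_nonneg (fun p => Pw sy b - sumR (nG sy) (fun g => blk_tr sy (pQ p g) b))
           (INR (nG sy) * INR (nM sy))).
  { apply Rmult_le_pos; apply pos_INR. }
  intros p e Hp Hc. split; [pose proof (proj1 (proj2 (proj1 Hp)) b Hb); lra|].
  replace (Pw sy b - sumR (nG sy) (fun g => blk_tr sy (pQ p g) b) -
    (Pw sy b - sumR (nG sy) (fun g => blk_tr sy (pQ xs g) b))) with
    (- (sumR (nG sy) (fun g => blk_tr sy (pQ p g) b) - sumR (nG sy) (fun g => blk_tr sy (pQ xs g) b)))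
    by ring.
  rewrite Rabs_Ropp, Rmult_assoc. apply Rabs_sumR_sub_le. intros g Hg.
  apply Rabs_sumR_sub_le. intros m Hm.
  assert (Hi : (b * nM sy + m < nN sy)%nat) by (unfold nN; nia).
  apply (pt_close_Q sy p xs e g _ _ Hc Hg Hi Hi).
Qed.

Lemma approx_zero_blocks g b b' m m' : (g < nG sy)%nat -> (b < nB sy)%nat -> (b' < nB sy)%nat ->
  (serv sy g b = false \/ serv sy g b' = false) -> (m < nM sy)%nat -> (m' < nM sy)%nat ->
  pQ xs g (b * nM sy + m)%nat (b' * nM sy + m')%nat = C0.
Proof.
  intros Hg Hb Hb' Hserv Hm Hm'.
  set (i := (b * nM sy + m)%nat). set (i' := (b' * nM sy + m')%nat).
  assert (Hi : (i < nN sy)%nat) by (unfold i, nN; nia).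
  assert (Hi' : (i' < nN sy)%nat) by (unfold i', nN; nia).
  assert (Hzero : forall p, RPF_feas sy p -> pQ p g i i' = C0).
  { intros p Hp. apply (proj2 (proj2 (proj1 Hp))); auto. }
  apply C_eq; simpl;
    [apply (approx_eq0 (fun p => Cre (pQ p g i i')) 1)
    |apply (approx_eq0 (fun p => Cim (pQ p g i i')) 1)];
    try lra; intros p e Hp Hc;
    destruct (pt_close_Q sy p xs e g i i' Hc Hg Hi Hi') as [H1 H2];
    rewrite (Hzero p Hp) in *; simpl in *; rewrite Rmult_1_l; auto.
Qed.

Lemma approx_InQset : InQset sy (pQ xs).
Proof.
  split; [|split].
  - intros g Hg. split; [apply approx_Hermitian|intros v; apply approx_quadform_nonneg]; auto.
  - exact approx_power_budget.
  - intros g b b' Hg Hb Hb' Hserv m m' Hm Hm'. apply approx_zero_blocks; auto.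
Qed.

Lemma approx_rate g h (sel : Pt -> R) : (g < nG sy)%nat ->
  (forall p e, RPF_feas sy p -> pt_close sy p xs e ->
     Rabs (sel p - sel xs) <= e /\ rho sy g h (pQ p) + / delta sy * (1 - sel p) >= pR p g) ->
  rho sy g h (pQ xs) + / delta sy * (1 - sel xs) >= pR xs g.
Proof.
  intros Hg Hsel. pose proof Hs as [Hdelta _].
  assert (Hid : 0 < / delta sy) by (apply Rinv_0_lt_compat; auto).
  pose proof ln2_pos. pose proof (tr_const_ge0 sy h). pose proof (pos_INR (nG sy)).
  set (Krho := 2 * INR (nG sy) * tr_const sy h / ln 2).
  assert (HKrho : 0 <= Krho).
  { unfold Krho, Rdiv. apply Rmult_le_pos; [nra|left; apply Rinv_0_lt_compat; lra]. }
  apply Rle_ge, Rge_le, Rminus_ge, Rle_ge.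
  apply (approx_nonneg (fun p => rho sy g h (pQ p) + / delta sy * (1 - sel p) - pR p g)
           (Krho + / delta sy + 1)); [lra|].
  intros p e Hp Hc. destruct (Hsel p e Hp Hc) as [Hs' Hr]. split; [lra|].
  pose proof (Rabs_rho_close sy p xs e g h Hc Hg
    (InQset_nonneg_tr sy _ h (proj1 Hp)) (InQset_nonneg_tr sy _ h approx_InQset)) as Hrho.
  assert (HR : Rabs (pR p g - pR xs g) <= e) by (left; apply (proj1 (proj2 Hc)); auto).
  assert (Hdsel : Rabs (/ delta sy * (sel p - sel xs)) <= / delta sy * e).
  { rewrite Rabs_mult, Rabs_right by lra. apply Rmult_le_compat_l; lra. }
  fold Krho in Hrho. apply Rabs_le_inv in Hrho, Hdsel, HR. apply Rabs_le. lra.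
Qed.

Lemma approx_PSD2 g : (g < nG sy)%nat ->
  PSD2 (pR xs g) (pA xs * sqrt (tau sy g * INR (card_grp sy g)))
       (sum_fb sy xs g + / INR (nJ sy) * sum_vir sy xs g).
Proof.
  intros Hg u v. pose proof Hs as (_ & HJ & _).
  set (s0 := sqrt (tau sy g * INR (card_grp sy g))).
  set (sums p := sum_fb sy p g + / INR (nJ sy) * sum_vir sy p g).
  assert (HJpos : 0 < INR (nJ sy)) by (apply lt_0_INR; lia).
  pose proof (pos_INR (nK sy)).
  apply (approx_nonneg (fun p => u * u * pR p g + 2 * u * v * (pA p * s0) + v * v * sums p)
           (u * u + Rabs (2 * u * v * s0) + v * v * (2 * INR (nK sy)))).
  { pose proof (Rabs_pos (2 * u * v * s0)). nra. }
  intros p e Hp Hc. split; [apply (proj1 (proj2 Hp) g Hg)|].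
  pose proof (pt_close_pos sy p xs e Hc).
  assert (HR : Rabs (pR p g - pR xs g) <= e) by (left; apply (proj1 (proj2 Hc)); auto).
  assert (HA : Rabs ((pA p - pA xs) * (2 * u * v * s0)) <= Rabs (2 * u * v * s0) * e).
  { rewrite Rabs_mult, Rmult_comm. apply Rmult_le_compat_l; [apply Rabs_pos|left; apply Hc]. }
  assert (Hsums : Rabs (sums p - sums xs) <= 2 * INR (nK sy) * e).
  { pose proof (Rabs_sum_fb_close sy p xs e g Hc) as Hfb.
    pose proof (Rabs_sum_vir_close sy p xs e g Hc) as Hvir.
    replace (sums p - sums xs) with ((sum_fb sy p g - sum_fb sy xs g)
       + / INR (nJ sy) * (sum_vir sy p g - sum_vir sy xs g)) by (unfold sums; ring).
    eapply Rle_trans; [apply Rabs_triang|].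
    rewrite Rabs_mult, (Rabs_right (/ INR (nJ sy))) by (left; apply Rinv_0_lt_compat; lra).
    replace (INR (nK sy) * (INR (nJ sy) * e)) with (INR (nJ sy) * (INR (nK sy) * e)) in Hvir by ring.
    assert (/ INR (nJ sy) * Rabs (sum_vir sy p g - sum_vir sy xs g) <= INR (nK sy) * e).
    { apply (Rmult_le_reg_l (INR (nJ sy))); auto. rewrite <- Rmult_assoc, Rinv_r by lra. lra. }
    lra. }
  apply Rabs_le_inv in HR, HA, Hsums. apply Rabs_le.
  assert (Huu : 0 <= u * u) by nra. assert (Hvv : 0 <= v * v) by nra.
  split; nra.
Qed.

Lemma approx_unit_interval (sel : Pt -> R) :
  (forall p e, RPF_feas sy p -> pt_close sy p xs e -> 0 <= sel p <= 1 /\ Rabs (sel p - sel xs) <= e) ->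
  0 <= sel xs <= 1.
Proof.
  intros Hsel. split; [|apply Rge_le, Rminus_ge, Rle_ge];
    [apply (approx_nonneg sel 1) | apply (approx_nonneg (fun p => 1 - sel p) 1)];
    try lra; intros p e Hp Hc; destruct (Hsel p e Hp Hc) as [Hbox Hd];
    apply Rabs_le_inv in Hd; split; try apply Rabs_le; lra.
Qed.

Lemma approx_RPF_feas : RPF_feas sy xs.
Proof.
  pose proof Hs as (_ & _ & _ & _ & Hgrp & _).
  split; [exact approx_InQset|]. split; [exact approx_PSD2|].
  split; [|split; [|split]].
  - intros k Hk Hf. apply (approx_rate _ _ (fun p => pS p k) (Hgrp k Hk)).
    intros p e Hp Hc. split; [left; apply Hc; auto|]. apply (proj1 (proj2 (proj2 Hp))); auto.
  - intros k j Hk Hf Hj. apply (approx_rate _ _ (fun p => pT p k j) (Hgrp k Hk)).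
    intros p e Hp Hc. split; [left; apply Hc; auto|]. apply (proj1 (proj2 (proj2 (proj2 Hp)))); auto.
  - intros k Hk Hf. apply (approx_unit_interval (fun p => pS p k)).
    intros p e Hp Hc. split; [apply (proj1 (proj2 (proj2 (proj2 (proj2 Hp))))); auto|].
    left; apply Hc; auto.
  - intros k j Hk Hf Hj. apply (approx_unit_interval (fun p => pT p k j)).
    intros p e Hp Hc. split; [apply (proj2 (proj2 (proj2 (proj2 (proj2 Hp))))); auto|].
    left; apply Hc; auto.
Qed.

End ClosedFeasibleSet.

Lemma quadratic_loss_beats_linear_gain a c S1 S2 eps0 :
  0 < a -> 0 <= c -> 0 <= S1 -> 0 <= S2 -> 0 < eps0 ->
  exists t eps, 0 < t <= eps0 /\ 0 < eps /\
    t * t * S1 + eps * eps * S2 <= 1 /\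
    (t * t * S1 + eps * eps * S2) * (c + t * a) < t * a.
Proof.
  intros Ha Hc HS1 HS2 Heps0.
  (* [t] makes the [S1]-part at most [t a / 2], then [eps] the [S2]-part at most [t a / 4]. *)
  set (M := c + a + 1).
  assert (HM : 0 < M) by (unfold M; lra).
  set (t := Rmin eps0 (Rmin 1 (a / (2 * (S1 + 1) * M)))).
  assert (Ht : 0 < t).
  { apply Rmin_glb_lt; auto. apply Rmin_glb_lt; [lra|]. apply Rdiv_lt_0_compat; auto. nra. }
  assert (Ht1 : t <= 1) by (eapply Rle_trans; [apply Rmin_r|apply Rmin_l]).
  assert (HtS1 : t * (S1 + 1) * M <= a / 2).
  { assert (Hle : t <= a / (2 * (S1 + 1) * M)) by (eapply Rle_trans; [apply Rmin_r|apply Rmin_r]).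
    replace (a / 2) with (a / (2 * (S1 + 1) * M) * ((S1 + 1) * M)) by (field; lra).
    apply (Rmult_le_compat_r ((S1 + 1) * M)) in Hle; [|nra]. lra. }
  set (eps := Rmin 1 (t * a / (4 * (S2 + 1) * M))).
  assert (Heps : 0 < eps).
  { apply Rmin_glb_lt; [lra|]. apply Rdiv_lt_0_compat; nra. }
  assert (Heps1 : eps <= 1) by apply Rmin_l.
  assert (HepsS2 : eps * (S2 + 1) * M <= t * a / 4).
  { assert (Hle : eps <= t * a / (4 * (S2 + 1) * M)) by apply Rmin_r.
    replace (t * a / 4) with (t * a / (4 * (S2 + 1) * M) * ((S2 + 1) * M)) by (field; lra).
    apply (Rmult_le_compat_r ((S2 + 1) * M)) in Hle; [|nra]. lra. }
  set (lam := t * t * S1 + eps * eps * S2).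
  assert (Hlam : lam * M <= 3 / 4 * (t * a)).
  { assert (t * t * S1 * M <= t * a / 2).
    { assert (0 <= t * t * M) by nra.
      assert (t * (t * (S1 + 1) * M) <= t * (a / 2)) by (apply Rmult_le_compat_l; lra).
      nra. }
    assert (eps * eps * S2 * M <= t * a / 4).
    { assert (0 <= eps * eps * M) by nra.
      assert (eps * (eps * (S2 + 1) * M) <= eps * (t * a / 4)) by (apply Rmult_le_compat_l; lra).
      assert (0 <= t * a) by nra. nra. }
    unfold lam. lra. }
  assert (Hlam0 : 0 <= lam) by (unfold lam; nra).
  exists t, eps. split; [split; [exact Ht|apply Rmin_l]|]. split; [exact Heps|].
  fold lam. split.
  - assert (t * a <= M) by (unfold M; nra). nra.
  - assert (c + t * a <= M) by (unfold M; nra). nra.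
Qed.

Lemma is_dirderiv_objective x d l : is_dirderiv objective x d l -> l = pA d.
Proof.
  intros Hl. destruct (Req_dec l (pA d)) as [|Hne]; [auto|exfalso].
  assert (Hpos : 0 < Rabs (pA d - l)) by (apply Rabs_pos_lt; lra).
  destruct (Hl _ Hpos) as (eta & Heta & Hslope).
  specialize (Hslope (eta / 2) ltac:(lra)). unfold objective in Hslope. simpl in Hslope.
  replace ((pA x + eta / 2 * pA d - pA x) / (eta / 2)) with (pA d) in Hslope by (field; lra).
  lra.
Qed.

Lemma interf_add_scale sy xs d t g h :
  interf sy (pQ (padd xs (pscale t d))) g h = interf sy (pQ xs) g h + t * interf sy (pQ d) g h.
Proof.
  unfold interf. rewrite <- sumR_scal, <- sumR_plus. apply sumR_ext; intros l _.
  destruct Nat.eqb; [ring|]. rewrite !trQhh_pair. apply mat_pair_add_scale.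
Qed.

Lemma rho_sub_rhobar_near sy xs d q t e g h : (g < nG sy)%nat ->
  InQset sy (pQ (padd xs (pscale t d))) -> InQset sy (pQ q) -> pt_close sy q xs e ->
  rho sy g h (pQ (padd xs (pscale t d))) - rhobar sy g h (pQ (padd xs (pscale t d))) (pQ q)
  <= 2 * (t * t * interf sy (pQ d) g h ^ 2 + e * e * (INR (nG sy) * tr_const sy h) ^ 2) / ln 2.
Proof.
  intros Hg Hp Hq Hc.
  destruct (rho_sub_rhobar_bounds sy g h _ _ Hg (InQset_nonneg_tr sy _ h Hp)
              (InQset_nonneg_tr sy _ h Hq)) as [_ Hgap].
  eapply Rle_trans; [exact Hgap|]. pose proof ln2_pos.
  unfold Rdiv. apply Rmult_le_compat_r; [left; apply Rinv_0_lt_compat; lra|].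
  rewrite interf_add_scale.
  pose proof (Rabs_interf_close sy q xs e g h Hc) as Hclose.
  set (D := interf sy (pQ d) g h). set (C := INR (nG sy) * tr_const sy h) in *.
  set (w := interf sy (pQ xs) g h - interf sy (pQ q) g h).
  replace (interf sy (pQ xs) g h + t * D - interf sy (pQ q) g h) with (t * D + w) by (unfold w; ring).
  assert (Hw : w ^ 2 <= (C * e) ^ 2).
  { unfold w. rewrite <- Rsqr_pow2, <- Rsqr_pow2, Rsqr_neg_minus. apply Rsqr_le_abs_1.
    rewrite (Rabs_right (C * e)); [lra|].
    pose proof (Rabs_pos (interf sy (pQ q) g h - interf sy (pQ xs) g h)). lra. }
  pose proof (pow2_ge_0 (t * D - w)). nra.
Qed.

Section Algorithm.
Variables (sy : Sys) (Qt0 : nat -> Mat) (x : nat -> Pt) (xs : Pt).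
Hypothesis Hs : sys_ok sy.
Hypothesis HQt0 : InQset sy Qt0.
Hypothesis Hx0 : CVX_opt sy Qt0 (x 0%nat).
Hypothesis Hstep : forall n, CVX_opt sy (pQ (x n)) (x (S n)).
Hypothesis Hlim : limit_point sy x xs.

Lemma iterate_RPF_feas n : RPF_feas sy (x n).
Proof.
  destruct n as [|n].
  - apply (cvx_feas_rpf_feas sy Qt0); auto. apply Hx0.
  - apply (cvx_feas_rpf_feas sy (pQ (x n))); [auto| |apply Hstep].
    destruct n; [apply (proj1 (proj1 Hx0))|apply (proj1 (proj1 (Hstep n)))].
Qed.

(* Each iterate is feasible for the next convex problem, since [rhobar] is
   tight at the linearization point. *)
Lemma objective_nondecreasing m n : (m <= n)%nat -> pA (x m) <= pA (x n).
Proof.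
  induction 1 as [|n _ IH]; [lra|].
  enough (pA (x n) <= pA (x (S n))) by lra.
  apply (proj2 (Hstep n)), rpf_feas_cvx_feas, iterate_RPF_feas; auto.
Qed.

Lemma objective_le_limit n : pA (x n) <= pA xs.
Proof.
  destruct (Rle_or_lt (pA (x n)) (pA xs)) as [|Hgt]; [auto|exfalso].
  destruct (Hlim ((pA (x n) - pA xs) / 2) ltac:(lra) n) as (m & Hnm & Hc).
  pose proof (objective_nondecreasing n m Hnm).
  destruct Hc as (_ & _ & _ & _ & HA). apply Rabs_def2 in HA. lra.
Qed.

Lemma limit_RPF_feas : RPF_feas sy xs.
Proof.
  apply approx_RPF_feas; auto. intros e He.
  destruct (Hlim e He 0%nat) as (n & _ & Hc). exists (x n). split; auto.
  apply iterate_RPF_feas.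
Qed.

Lemma limit_no_ascent d : feasible_dir sy xs d -> pA d <= 0.
Proof.
  intros (eps0 & Heps0 & Hdir).
  destruct (Rle_or_lt (pA d) 0) as [|Ha]; [auto|exfalso].
  destruct (user_chan_bounded sy (fun g h => interf sy (pQ d) g h ^ 2)) as (S1 & HS1 & HbS1).
  destruct (user_chan_bounded sy (fun g h => (INR (nG sy) * tr_const sy h) ^ 2))
    as (S2 & HS2 & HbS2).
  pose proof Hs as [Hdelta _]. pose proof ln2_pos.
  set (q := 2 * delta sy / ln 2).
  assert (Hq : 0 < q) by (unfold q; apply Rdiv_lt_0_compat; lra).
  destruct (quadratic_loss_beats_linear_gain (pA d) (Rabs (pA xs)) (q * S1) (q * S2) eps0
              Ha (Rabs_pos _) ltac:(nra) ltac:(nra) Heps0)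
    as (t & e & Ht & He & Hlam1 & Hgain).
  set (lam := t * t * (q * S1) + e * e * (q * S2)) in Hlam1, Hgain.
  assert (Hlam0 : 0 <= lam) by (unfold lam; apply Rplus_le_le_0_compat; apply Rmult_le_pos; nra).
  set (p := padd xs (pscale t d)).
  assert (Hp : RPF_feas sy p) by (apply Hdir; lra).
  destruct (Hlim e He 0%nat) as (n & _ & Hc).
  assert (Hy : CVX_feas sy (pQ (x n)) (shrink (1 - lam) p)).
  { apply (feas_gen_shrink sy (rho sy)); [exact Hp|lra| |].
    - intros g h Hgh. apply rho_ge0; [exact (user_chan_grp sy g h Hs Hgh)|].
      apply (InQset_nonneg_tr sy _ h), Hp.
    - intros g h Hgh. replace ((1 - (1 - lam)) * / delta sy)
        with (2 * (t * t * S1 + e * e * S2) / ln 2) by (unfold lam, q; field; lra).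
      eapply Rle_trans.
      + apply rho_sub_rhobar_near; [exact (user_chan_grp sy g h Hs Hgh)|apply Hp| |exact Hc].
        apply iterate_RPF_feas.
      + pose proof (HbS1 g h Hgh). pose proof (HbS2 g h Hgh).
        unfold Rdiv. apply Rmult_le_compat_r; [left; apply Rinv_0_lt_compat; lra|].
        assert (0 <= t * t) by nra. assert (0 <= e * e) by nra. nra. }
  pose proof (proj2 (Hstep n) _ Hy) as Hopt. pose proof (objective_le_limit (S n)).
  simpl in Hopt. pose proof (Rle_abs (pA xs)). nra.
Qed.

End Algorithm.

Theorem proposition2 (sy : Sys) (Qt0 : nat -> Mat) (x : nat -> Pt) (xs : Pt) :
  sys_ok sy ->
  InQset sy Qt0 ->
  CVX_opt sy Qt0 (x 0%nat) ->
  (forall n, CVX_opt sy (pQ (x n)) (x (S n))) ->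
  limit_point sy x xs ->
  stationary sy xs.
Proof.
  intros Hs HQt0 Hx0 Hstep Hlim. split.
  - exact (limit_RPF_feas sy Qt0 x xs Hs HQt0 Hx0 Hstep Hlim).
  - intros d Hd l Hl. rewrite (is_dirderiv_objective _ _ _ Hl).
    exact (limit_no_ascent sy Qt0 x xs Hs HQt0 Hx0 Hstep Hlim d Hd).
Qed.
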